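(* For every state $\rho$, $C_f^{\mathcal U}(\rho)\ge2\max_{i\neq j}|\rho_{ij}|$. Moreover, for every single-qubit state $\rho=\begin{pmatrix}p&z\\ z^*&1-p\end{pmatrix}$, \[ C_f^{\mathcal U}(\rho)=\begin{cases}2|z| & \text{if } |z|\le\min\{p,1-p\},\\ +\infty&\text{otherwise.}\end{cases} \]
   Context: Fixed computational basis; logs base 2. $\mathcal U_k$ is the set of uniformly coherent states $|\Psi\rangle=k^{-1/2}\sum_{j\in J}e^{i\theta_j}|j\rangle$ with $|J|=k$, $\theta_j\in\mathbb R$. $C_f^{\mathcal U}(\rho)=\inf\{\sum_\alpha p_\alpha\log k_\alpha:\rho=\sum_\alpha p_\alpha|\Psi_\alpha\rangle\langle\Psi_\alpha|,\ |\Psi_\alpha\rangle\in\mathcal U_{k_\alpha}\}$ over finite convex decompositions, and $+\infty$ if none exists. *)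

From HB Require Import structures.
From mathcomp Require Import all_boot all_order all_algebra.
From mathcomp Require Import complex.
From mathcomp Require Import all_classical all_reals all_analysis.
Set Implicit Arguments. Unset Strict Implicit. Unset Printing Implicit Defensive.
Import Order.TTheory GRing.Theory Num.Theory.
Local Open Scope ring_scope.

Section Defs.
Variable R : realType.
Local Notation C := R[i].

Definition cmod (z : C) : R := Num.sqrt (complex.Re z ^+ 2 + complex.Im z ^+ 2).

Definition adj (m n : nat) (A : 'M[C]_(m, n)) : 'M[C]_(n, m) := (map_mx conjc A)^T.

Definition log2 (x : R) : R := ln x / ln 2.

Definition is_state (d : nat) (rho : 'M[C]_d) : Prop :=
  adj rho = rho /\
  (forall x : 'cV[C]_d, 0 <= (adj x *m rho *m x) 0 0) /\
  \tr rho = 1.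

Definition unif_coherent (d k : nat) (psi : 'cV[C]_d) : Prop :=
  (0 < k)%N /\
  exists (J : {set 'I_d}) (theta : 'I_d -> R),
    #|J| = k /\
    forall j : 'I_d, psi j 0 =
      if j \in J then real_complex R ((Num.sqrt (k%:R))^-1) * (Complex (cos (theta j)) (sin (theta j)))
      else 0.

Definition CfU_costs (d : nat) (rho : 'M[C]_d) : set R :=
  [set c | exists (m : nat) (p : 'I_m -> R) (k : 'I_m -> nat) (psi : 'I_m -> 'cV[C]_d),
     (forall a, 0 <= p a) /\ \sum_(a < m) p a = 1 /\
     (forall a, unif_coherent (k a) (psi a)) /\
     rho = \sum_(a < m) real_complex R (p a) *: (psi a *m adj (psi a)) /\
     c = \sum_(a < m) p a * log2 (k a)%:R].

(* C_f^U(rho); the infimum of the empty set is +oo *)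
Definition CfU (d : nat) (rho : 'M[C]_d) : \bar R :=
  ereal_inf [set c%:E | c in CfU_costs rho].

(* max_{i <> j} |rho_ij| (0 if d <= 1) *)
Definition max_offdiag (d : nat) (rho : 'M[C]_d) : R :=
  \big[Num.max/0]_(i < d) \big[Num.max/0]_(j < d | i != j) cmod (rho i j).

Definition qubit (p : R) (z : C) : 'M[C]_2 :=
  \matrix_(i < 2, j < 2)
    if (i == 0 :> nat) then (if (j == 0 :> nat) then real_complex R p else z)
    else (if (j == 0 :> nat) then conjc z else real_complex R (1 - p)).

End Defs.

From HB Require Import structures.
From mathcomp Require Import all_boot all_order all_algebra.
From mathcomp Require Import complex.
From mathcomp Require Import all_classical all_reals all_analysis.
From mathcomp Require Import ring lra.
Set Implicit Arguments. Unset Strict Implicit.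
Import Order.TTheory GRing.Theory Num.Theory.
Local Open Scope ring_scope.
Local Open Scope complex_scope.

(** Writing [rho = sum_a p_a psi_a psi_a^*] with [psi_a] uniformly coherent of
   support size [k_a], the triangle inequality gives
   [|rho_ij| <= sum_a p_a |psi_a(i)| |psi_a(j)|].  For [i <> j] the product
   [|psi_a(i)| |psi_a(j)|] is [0] or [1/k_a] with [k_a >= 2], and [2/k <= 1 <= log2 k],
   whence [2 |rho_ij| <= sum_a p_a log2 k_a].  Since all nonzero amplitudes of a
   uniformly coherent vector are equal, the same estimate also gives
   [|rho_ij| <= rho_ii]; for the qubit this forces [|z| <= min(p, 1 - p)] whenever
   a decomposition exists.  Conversely, if [|z| <= min(p, 1 - p)], an explicit
   decomposition of cost [2|z|] exists, so the lower bound is attained. *)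

Section ComplexModulus.
Variable R : realType.
Local Notation C := R[i].
Implicit Types (x : R) (z w : C).

Lemma cmodE z : (cmod z)%:C = `|z|.
Proof. by rewrite normc_def. Qed.

Lemma cmod_ge0 z : 0 <= cmod z.
Proof. by rewrite -(lecR 0) cmodE; exact: normr_ge0. Qed.

Lemma cmod0 : cmod (0 : C) = 0.
Proof. by apply: complexI; rewrite cmodE normr0. Qed.

Lemma cmodM z w : cmod (z * w) = cmod z * cmod w.
Proof. by apply: complexI; rewrite cmodE normrM -!cmodE -rmorphM. Qed.

Lemma cmodJ z : cmod (conjc z) = cmod z.
Proof. by apply: complexI; rewrite !cmodE normcJ. Qed.

Lemma cmod_real x : cmod x%:C = `|x|.
Proof. by rewrite /cmod /= expr0n /= addr0 sqrtr_sqr. Qed.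

Lemma ler_cmod_sum (I : finType) (F : I -> C) :
  cmod (\sum_i F i) <= \sum_i cmod (F i).
Proof.
rewrite -lecR cmodE; apply: le_trans (ler_norm_sum _ _ _) _.
by rewrite rmorph_sum /=; apply: ler_sum => i _; rewrite cmodE.
Qed.

Lemma mulcJ_cmod z : z * conjc z = (cmod z ^+ 2)%:C.
Proof. by rewrite -sqr_normc -cmodE rmorphXn. Qed.

Lemma conjc_realM x z : conjc (x%:C * z) = x%:C * conjc z.
Proof. by case: z => a b; simpc. Qed.

Definition expi x : C := Complex (cos x) (sin x).

Lemma cmod_expi x : cmod (expi x) = 1.
Proof. by rewrite /cmod /= cos2Dsin2 sqrtr1. Qed.

Lemma expi0 : expi 0 = 1.
Proof. by rewrite /expi cos0 sin0. Qed.

Lemma expiN x : expi (- x) = conjc (expi x).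
Proof. by rewrite /expi cosN sinN. Qed.

Lemma expiB x y : expi x * conjc (expi y) = expi (x - y).
Proof.
by apply/eqP; rewrite eq_complex /= cosB sinB; apply/andP; split; apply/eqP; ring.
Qed.

Lemma exists_cos_sin x y : x ^+ 2 + y ^+ 2 = 1 -> exists t, cos t = x /\ sin t = y.
Proof.
move=> xy1; have x_itv : -1 <= x <= 1 by apply/andP; split; nra.
have sqrt_y : Num.sqrt (1 - x ^+ 2) = `|y| by rewrite -xy1 addrAC subrr add0r sqrtr_sqr.
have [y_ge0|y_lt0] := leP 0 y.
  exists (acos x); rewrite acosK ?sin_acos ?sqrt_y ?ger0_norm //.
exists (- acos x); rewrite cosN sinN acosK ?sin_acos ?sqrt_y ?ltr0_norm ?opprK //.
Qed.

Lemma polar_form z : exists t, z = (cmod z)%:C * expi t.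
Proof.
have [->|z_neq0] := eqVneq z 0; first by exists 0; rewrite cmod0 mul0r.
have r_neq0 : cmod z != 0.
  by apply: contra z_neq0 => /eqP r0; rewrite -normr_eq0 -cmodE r0.
have r2 : cmod z ^+ 2 = complex.Re z ^+ 2 + complex.Im z ^+ 2.
  by rewrite sqr_sqrtr // addr_ge0 // sqr_ge0.
have [t [cos_t sin_t]] :
    exists t, cos t = complex.Re z / cmod z /\ sin t = complex.Im z / cmod z.
  by apply: exists_cos_sin; rewrite !expr_div_n -mulrDl -r2 divff // expf_neq0.
exists t; apply/eqP; rewrite eq_complex /= cos_t sin_t !mul0r subr0 addr0.
by rewrite !mulrA !(mulrC (cmod z)) !mulfK // !eqxx.
Qed.

End ComplexModulus.

Section Log2.
Variable R : realType.

Lemma log2_nat_ge0 (k : nat) : (0 < k)%N -> 0 <= log2 (k%:R : R).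
Proof. by move=> k_gt0; rewrite divr_ge0 ?ln_ge0 ?ler1n // ln_ge0 // ler1n. Qed.

Lemma log2_nat_ge1 (k : nat) : (2 <= k)%N -> 1 <= log2 (k%:R : R).
Proof.
move=> k_ge2; have ln2_gt0 : 0 < ln (2 : R) by rewrite ln_gt0 // ltr1n.
rewrite ler_pdivlMr // mul1r ler_ln ?posrE ?ler_nat //.
by rewrite ltr0n (leq_trans _ k_ge2).
Qed.

Lemma log2_1 : log2 (1 : R) = 0.
Proof. by rewrite /log2 ln1 mul0r. Qed.

Lemma log2_2 : log2 (2 : R) = 1.
Proof. by rewrite /log2 divff // gt_eqF // ln_gt0 // ltr1n. Qed.

End Log2.

Section UniformlyCoherent.
Variables (R : realType) (d k : nat) (psi : 'cV[R[i]]_d).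
Hypothesis psi_coh : unif_coherent k psi.

Lemma unif_coherent_cmod : exists2 J : {set 'I_d}, #|J| = k &
  forall j, cmod (psi j 0) = if j \in J then (Num.sqrt k%:R)^-1 else 0.
Proof.
have [_ [J [th [cardJ psiE]]]] := psi_coh; exists J => // j.
rewrite psiE; case: ifP => _; last exact: cmod0.
by rewrite cmodM cmod_expi mulr1 cmod_real ger0_norm // invr_ge0 sqrtr_ge0.
Qed.

Lemma unif_coherent_cross_le_log2 i j : i != j ->
  2 * (cmod (psi i 0) * cmod (psi j 0)) <= log2 k%:R.
Proof.
move=> neq_ij; have [J cardJ psiE] := unif_coherent_cmod; rewrite !psiE.
have k_gt0 : (0 < k)%N by case: psi_coh.
case: ifP => iJ; case: ifP => jJ; rewrite ?mul0r ?mulr0 ?log2_nat_ge0 //.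
have k_ge2 : (2 <= k)%N.
  have sub_ijJ : [set i; j] \subset J by rewrite finset.subUset !finset.sub1set iJ jJ.
  by rewrite -cardJ (leq_trans _ (subset_leq_card sub_ijJ)) // cards2 neq_ij.
rewrite -invrM ?unitfE ?sqrtr_eq0 -?ltNge ?ltr0n // -expr2 sqr_sqrtr ?ler0n //.
apply: le_trans (log2_nat_ge1 _ k_ge2).
by rewrite ler_pdivrMr ?ltr0n // mul1r ler_nat.
Qed.

Lemma unif_coherent_cross_le_sqr i j :
  cmod (psi i 0) * cmod (psi j 0) <= cmod (psi i 0) ^+ 2.
Proof.
have [J _ psiE] := unif_coherent_cmod; rewrite !psiE expr2.
by case: ifP => _; case: ifP => _; rewrite ?mul0r ?mulr0.
Qed.

End UniformlyCoherent.

Section Decompositions.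
Variables (R : realType) (d : nat).
Local Notation C := R[i].
Implicit Types (rho : 'M[C]_d) (c : R).

Lemma outer_entry (psi : 'cV[C]_d) i j :
  (psi *m adj psi) i j = psi i 0 * conjc (psi j 0).
Proof. by rewrite !mxE big_ord1 !mxE. Qed.

Lemma mixture_entry m (p : 'I_m -> R) (psi : 'I_m -> 'cV[C]_d) i j :
  (\sum_(a < m) (p a)%:C *: (psi a *m adj (psi a))) i j =
  \sum_(a < m) (p a)%:C * (psi a i 0 * conjc (psi a j 0)).
Proof. by rewrite summxE; apply: eq_bigr => a _; rewrite mxE outer_entry. Qed.

Lemma mixture_entry_le m (p : 'I_m -> R) (psi : 'I_m -> 'cV[C]_d) i j :
  (forall a, 0 <= p a) ->
  cmod ((\sum_(a < m) (p a)%:C *: (psi a *m adj (psi a))) i j) <=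
  \sum_(a < m) p a * (cmod (psi a i 0) * cmod (psi a j 0)).
Proof.
move=> p_ge0; rewrite mixture_entry; apply: le_trans (ler_cmod_sum _) _.
by apply: ler_sum => a _; rewrite !cmodM cmodJ cmod_real ger0_norm.
Qed.

Lemma mixture_diag m (p : 'I_m -> R) (psi : 'I_m -> 'cV[C]_d) i :
  (\sum_(a < m) (p a)%:C *: (psi a *m adj (psi a))) i i =
  (\sum_(a < m) p a * cmod (psi a i 0) ^+ 2)%:C.
Proof.
rewrite mixture_entry rmorph_sum /=; apply: eq_bigr => a _.
by rewrite mulcJ_cmod -rmorphM.
Qed.

Lemma CfU_costs_ge0 rho c : CfU_costs rho c -> 0 <= c.
Proof.
move=> [m [p [k [psi [p_ge0 [_ [psi_coh [_ ->]]]]]]]].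
apply: sumr_ge0 => a _; rewrite mulr_ge0 ?log2_nat_ge0 //; exact: (psi_coh a).1.
Qed.

Lemma CfU_costs_offdiag_le rho c i j : CfU_costs rho c -> i != j ->
  2 * cmod (rho i j) <= c.
Proof.
move=> [m [p [k [psi [p_ge0 [_ [psi_coh [-> ->]]]]]]]] neq_ij.
apply: le_trans (ler_wpM2l _ (mixture_entry_le _ i j p_ge0)) _ => //.
rewrite mulr_sumr; apply: ler_sum => a _.
by rewrite mulrCA ler_wpM2l // unif_coherent_cross_le_log2.
Qed.

Lemma CfU_costs_entry_le_diag rho c i j : CfU_costs rho c ->
  cmod (rho i j) <= complex.Re (rho i i).
Proof.
move=> [m [p [k [psi [p_ge0 [_ [psi_coh [-> _]]]]]]]].
rewrite mixture_diag /=; apply: le_trans (mixture_entry_le _ i j p_ge0) _.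
by apply: ler_sum => a _; rewrite ler_wpM2l // (unif_coherent_cross_le_sqr (psi_coh a)).
Qed.

End Decompositions.

Section CoherenceCost.
Variables (R : realType) (d : nat).
Local Notation C := R[i].
Implicit Types (rho : 'M[C]_d) (c : R).

Lemma max_offdiag_le rho x : 0 <= x ->
  (forall i j, i != j -> cmod (rho i j) <= x) -> max_offdiag rho <= x.
Proof.
by move=> x_ge0 le_x; apply: bigmax_le => // i _; apply: bigmax_le => // j; apply: le_x.
Qed.

Lemma cmod_le_max_offdiag rho i j : i != j -> cmod (rho i j) <= max_offdiag rho.
Proof.
move=> neq_ij; apply: le_trans (le_bigmax _ _ i).
exact: (le_bigmax_cond _ (P := fun j => i != j)).
Qed.

Lemma CfU_ge_max_offdiag rho : ((2 * max_offdiag rho)%:E <= CfU rho)%E.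
Proof.
apply: le_ereal_inf_tmp => _ [c cost_c <-]; rewrite lee_fin mulrC -ler_pdivlMr //.
apply: max_offdiag_le => [|i j neq_ij].
  by rewrite divr_ge0 // (CfU_costs_ge0 cost_c).
by rewrite ler_pdivlMr // mulrC (CfU_costs_offdiag_le cost_c).
Qed.

Lemma CfU_le_cost rho c : CfU_costs rho c -> (CfU rho <= c%:E)%E.
Proof. by move=> cost_c; apply: ereal_inf_lbound; exists c. Qed.

Lemma CfU_undecomposable rho : (forall c, ~ CfU_costs rho c) -> CfU rho = +oo%E.
Proof.
move=> no_cost; rewrite /CfU (_ : [set _ | _ in _] = set0)%classic ?ereal_inf0 //.
by apply/seteqP; split=> // x [c /no_cost].
Qed.

Definition unif_vec (J : {set 'I_d}) (th : 'I_d -> R) : 'cV[C]_d :=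
  \col_j (if j \in J then ((Num.sqrt #|J|%:R)^-1)%:C * expi (th j) else 0).

Lemma unif_vec_coherent (J : {set 'I_d}) th :
  (0 < #|J|)%N -> unif_coherent #|J| (unif_vec J th).
Proof. by move=> J_gt0; split=> //; exists J, th; split=> // j; rewrite mxE. Qed.

Lemma outer_unif_vec (J : {set 'I_d}) th i j :
  (unif_vec J th *m adj (unif_vec J th)) i j =
  if (i \in J) && (j \in J) then (#|J|%:R^-1)%:C * expi (th i - th j) else 0.
Proof.
rewrite outer_entry !mxE; case: ifP => iJ; case: ifP => jJ //;
  rewrite ?conjc0 ?mul0r ?mulr0 //.
by rewrite conjc_realM mulrACA expiB -rmorphM -expr2 exprVn sqr_sqrtr ?ler0n.
Qed.

Lemma CfU_costs_unif_vec m (p : 'I_m -> R) (J : 'I_m -> {set 'I_d})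
    (th : 'I_m -> 'I_d -> R) :
  (forall a, 0 <= p a) -> \sum_(a < m) p a = 1 -> (forall a, 0 < #|J a|)%N ->
  CfU_costs
    (\sum_(a < m) (p a)%:C *: (unif_vec (J a) (th a) *m adj (unif_vec (J a) (th a))))
    (\sum_(a < m) p a * log2 #|J a|%:R).
Proof.
move=> p_ge0 p_sum1 J_gt0.
exists m, p, (fun a => #|J a|), (fun a => unif_vec (J a) (th a)).
by do 2!split=> //; split=> [a|]; [apply: unif_vec_coherent | split].
Qed.

End CoherenceCost.

Section Qubit.
Variable R : realType.
Local Notation C := R[i].

Lemma qubit_CfU_costs (p : R) (z : C) : cmod z <= Num.min p (1 - p) ->
  CfU_costs (qubit p z) (2 * cmod z).
Proof.
rewrite le_min => /andP[r_le_p r_le_1p].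
have [t z_polar] := polar_form z; set r := cmod z in r_le_p r_le_1p z_polar *.
(* With [z = r e^(it)], [qubit p z] is [(p - r) |0><0| + (1 - p - r) |1><1|]
   plus [2r] times the projector on [(e^(it) |0> + |1>) / sqrt 2], at cost [2r]. *)
pose P (a : 'I_3) := [:: p - r; 1 - p - r; 2 * r]`_a.
pose J (a : 'I_3) := nth [set: 'I_2] [:: [set ord0]; [set ord_max]] a.
pose th (a : 'I_3) (j : 'I_2) := if j == ord0 then t else 0.
have -> : 2 * r = \sum_(a < 3) P a * log2 #|J a|%:R.
  by rewrite !big_ord_recr big_ord0 /P /J /= !cards1 cardsT card_ord log2_1 log2_2; lra.
have -> : qubit p z =
    \sum_(a < 3) (P a)%:C *: (unif_vec (J a) (th a) *m adj (unif_vec (J a) (th a))).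
  apply/matrixP => i j; rewrite summxE.
  under eq_bigr => a _ do rewrite mxE outer_unif_vec.
  rewrite !big_ord_recr big_ord0 /P /J /th /= !cards1 cardsT card_ord.
  rewrite !finset.in_set1 !finset.in_setT.
  case: i => [[|[|//]] ?]; case: j => [[|[|//]] ?]; rewrite !mxE /=;
    by rewrite ?z_polar ?conjc_realM ?subrr ?subr0 ?sub0r ?expiN ?expi0; field.
apply: CfU_costs_unif_vec => [a||a].
- by rewrite /P; case: a => [[|[|[|]]] ?] //=; rewrite ?subr_ge0 ?mulr_ge0 ?cmod_ge0.
- by rewrite !big_ord_recr big_ord0 /P /=; ring.
- by rewrite /J; case: a => [[|[|[|]]] ?] //=; rewrite ?cards1 ?cardsT ?card_ord.
Qed.

Lemma CfU_qubit_feasible (p : R) (z : C) : cmod z <= Num.min p (1 - p) ->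
  CfU (qubit p z) = (2 * cmod z)%:E.
Proof.
move=> feasible; apply/le_anti/andP; split; first exact/CfU_le_cost/qubit_CfU_costs.
apply: le_trans (CfU_ge_max_offdiag _); rewrite lee_fin ler_wpM2l //.
by have := cmod_le_max_offdiag (qubit p z) (i := 0) (j := 1); rewrite !mxE; apply.
Qed.

Lemma CfU_qubit_infeasible (p : R) (z : C) : ~~ (cmod z <= Num.min p (1 - p)) ->
  CfU (qubit p z) = +oo%E.
Proof.
move=> /negP infeasible; apply: CfU_undecomposable => c cost_c; apply: infeasible.
rewrite le_min; apply/andP; split.
- by have := CfU_costs_entry_le_diag 0 1 cost_c; rewrite !mxE.
- by have := CfU_costs_entry_le_diag 1 0 cost_c; rewrite !mxE /= cmodJ.
Qed.

End Qubit.

Theorem proposition4 (R : realType) :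
  (forall (d : nat) (rho : 'M[R[i]]_d), is_state rho ->
     ((2 * max_offdiag rho)%:E <= CfU rho)%E) /\
  (forall (p : R) (z : R[i]), is_state (qubit p z) ->
     CfU (qubit p z) =
       if cmod z <= Num.min p (1 - p) then (2 * cmod z)%:E else +oo%E).
Proof.
split=> [d rho _ | p z _]; first exact: CfU_ge_max_offdiag.
by case: ifPn => [/CfU_qubit_feasible | /CfU_qubit_infeasible].
Qed.
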